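(* Let $\Delta_+=\{\delta-\gamma:\gamma\in\Sigma^+_{\beta,0}\cap\Sigma_{\delta,1}\}$ and $\Delta_-=\{\delta+\gamma:\gamma\in\Sigma^+_{\beta,0}\cap\Sigma_{\delta,-1}\}$. Then $\Sigma_{\beta,1}\cap\Sigma_{\delta,1}=\Delta_+\sqcup\Delta_-$, $\Sigma_{\beta,1}\cap\Sigma_{\delta,0}=\{\beta-\gamma:\gamma\in\Sigma_{\beta,1}\cap\Sigma_{\delta,1}\}$, $\Sigma_{\beta,1}\cap\Sigma_{\delta,2}=\{\delta\}$, and $\Sigma_{\beta,1}\cap\Sigma_{\delta,-1}=\{\beta-\delta\}$.
   Context: Let $\mathfrak g$ be a compact simple Lie algebra not isomorphic to $\mathfrak{sp}(n)$, $\mathfrak a$ a maximal abelian subalgebra, $\Sigma$ the root system of $\mathfrak g^{\mathbb C}$ w.r.t. $\mathfrak a^{\mathbb C}$ with inner product $(\,,\,)$ induced by the Killing form, $\Sigma^+$ a positive system with highest root $\beta$. For $\gamma\in\Sigma$ and $n\in\mathbb Z$ let $\Sigma_{\gamma,n}=\{\alpha\in\Sigma:2(\gamma,\alpha)/(\gamma,\gamma)=n\}$ and $\Sigma^+_{\gamma,n}=\Sigma_{\gamma,n}\cap\Sigma^+$. Fix $\delta\in\Sigma_{\beta,1}$ with $(\delta,\delta)=(\beta,\beta)$. *)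

From HB Require Import structures.
From mathcomp Require Import all_boot all_order all_algebra.
From mathcomp Require Import reals.
Set Implicit Arguments. Unset Strict Implicit. Unset Printing Implicit Defensive.
Import Order.TTheory GRing.Theory Num.Theory.
Local Open Scope ring_scope.

Section RootSystems.
Variables (R : realType) (n : nat).
Notation V := 'rV[R]_n.

Definition dot (u v : V) : R := \sum_(i < n) u 0 i * v 0 i.

Definition cpair (g a : V) : R := 2 * dot g a / dot g g.

Definition refl (a x : V) : V := x - (2 * dot x a / dot a a) *: a.

Definition is_root_system (S : seq V) : Prop :=
  [/\ (0 : V) \notin S,
      (<<S>>%VS = fullv),
      (forall a b, a \in S -> b \in S -> refl a b \in S) &
      (forall a b, a \in S -> b \in S -> exists z : int, cpair a b = z%:~R)].

Definition reduced (S : seq V) : Prop :=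
  forall a b, a \in S -> b \in S -> (exists c : R, b = c *: a) -> b = a \/ b = - a.

Definition irreducible (S : seq V) : Prop :=
  S <> [::] /\
  forall P : pred V,
    (forall a b, a \in S -> b \in S -> P a -> ~~ P b -> dot a b = 0) ->
    (forall a, a \in S -> P a) \/ (forall a, a \in S -> ~~ P a).

Definition is_positive_system (S Sp : seq V) : Prop :=
  exists v : V, (forall a, a \in S -> dot v a != 0) /\
    (forall a, a \in Sp <-> (a \in S /\ 0 < dot v a)).

Definition simple_root (Sp : seq V) (a : V) : bool :=
  (a \in Sp) && ~~ [exists i : 'I_(size Sp), exists j : 'I_(size Sp),
                      a == Sp`_i + Sp`_j].

Definition highest_root (S Sp : seq V) (b : V) : Prop :=
  b \in S /\
  forall a, a \in S -> exists k : V -> nat,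
    b - a = \sum_(s <- Sp | simple_root Sp s) (k s)%:R *: s.

Definition e (i : 'I_n) : V := delta_mx 0 i.
Definition isCn (x : V) : Prop :=
  (exists i, x = 2%:R *: e i \/ x = - (2%:R *: e i)) \/
  (exists i j, i != j /\ exists s t : bool,
      x = (-1) ^+ s *: e i + (-1) ^+ t *: e j).

Definition type_C (S : seq V) : Prop :=
  exists M : 'M[R]_n, M \in unitmx /\ forall x, x \in S <-> isCn (x *m M).

Definition Sig (S : seq V) (g : V) (k : int) : pred V :=
  fun a => (a \in S) && (cpair g a == k%:~R).

End RootSystems.

From HB Require Import structures.
From mathcomp Require Import all_boot all_order all_algebra.
From mathcomp Require Import reals.
From mathcomp Require Import lra.
Import Order.TTheory GRing.Theory Num.Theory.
Local Open Scope ring_scope.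

(* If [cpair c x = 1] then [refl c x = x - c], so [c - x] is again a root.
   As [cpair g] is additive in its second argument and
   [cpair beta delta = cpair delta beta = 1], subtracting from [beta] or from
   [delta] maps the sets [Sig beta i :&: Sig delta j] onto one another; the sign
   of the root [delta - a] then decides between Delta_+ and Delta_-.  The two
   singletons come from integrality: a root [c] with [cpair y c = 1] has
   [|c|^2 <= |y|^2], so if also [(x, c) = |x|^2 = |y|^2] then [|c - x|^2 <= 0]. *)

Section InnerProduct.
Context {R : realType} {n : nat}.
Implicit Types g x y z : 'rV[R]_n.

Lemma dotC x y : dot x y = dot y x.
Proof. by apply: eq_bigr => i _; rewrite mulrC. Qed.

Lemma dotDr x y z : dot x (y + z) = dot x y + dot x z.
Proof. by rewrite /dot -big_split; apply: eq_bigr => i _; rewrite mxE mulrDr. Qed.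

Lemma dotNr x y : dot x (- y) = - dot x y.
Proof. by rewrite /dot -sumrN; apply: eq_bigr => i _; rewrite mxE mulrN. Qed.

Lemma dotBr x y z : dot x (y - z) = dot x y - dot x z.
Proof. by rewrite dotDr dotNr. Qed.

Lemma dotBl x y z : dot (y - z) x = dot y x - dot z x.
Proof. by rewrite dotC dotBr !(dotC x). Qed.

Lemma dot_self_ge0 x : 0 <= dot x x.
Proof. by apply: sumr_ge0 => i _; rewrite -expr2 sqr_ge0. Qed.

Lemma dot_self_eq0 x : (dot x x == 0) = (x == 0).
Proof.
apply/eqP/eqP => [x0|->]; last by rewrite /dot big1 // => i _; rewrite mxE mul0r.
apply/rowP => i; rewrite mxE; apply/eqP; rewrite -sqrf_eq0.
have sq_ge0 j : true -> 0 <= x 0 j ^+ 2 by rewrite sqr_ge0.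
by apply/eqP/(psumr_eq0P sq_ge0); rewrite // -x0; apply: eq_bigr => j _; rewrite expr2.
Qed.

Lemma eq_of_dot_self_le x y : dot x x <= dot y y -> dot x y = dot y y -> x = y.
Proof.
move=> le_xy dxy; apply/eqP; rewrite -subr_eq0 -dot_self_eq0 eq_le dot_self_ge0 andbT.
by rewrite !dotBr !dotBl (dotC y x) dxy; lra.
Qed.

Lemma cpairE g x : cpair g x = 2 / dot g g * dot g x.
Proof. by rewrite /cpair mulrAC. Qed.

Lemma cpairDr g x y : cpair g (x + y) = cpair g x + cpair g y.
Proof. by rewrite !cpairE dotDr mulrDr. Qed.

Lemma cpairNr g x : cpair g (- x) = - cpair g x.
Proof. by rewrite !cpairE dotNr mulrN. Qed.

Lemma cpairBr g x y : cpair g (x - y) = cpair g x - cpair g y.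
Proof. by rewrite cpairDr cpairNr. Qed.

Lemma cpairxx g : g != 0 -> cpair g g = 2.
Proof. by rewrite -dot_self_eq0 => g0; rewrite /cpair mulfK. Qed.

Lemma cpair_dot g x : g != 0 -> 2 * dot g x = cpair g x * dot g g.
Proof. by rewrite -dot_self_eq0 => g0; rewrite /cpair divfK. Qed.

Lemma reflE g x : refl g x = x - cpair g x *: g.
Proof. by rewrite /refl /cpair dotC. Qed.

End InnerProduct.

Section RootSystem.
Context {R : realType} {n : nat} {S : seq 'rV[R]_n}.
Hypothesis rsS : is_root_system S.
Implicit Types a c g x y : 'rV[R]_n.

Lemma root_neq0 {a} : a \in S -> a != 0.
Proof. by case: rsS => S0 _ _ _ aS; apply: contraNneq S0 => <-. Qed.

Lemma root_dot_gt0 {a} : a \in S -> 0 < dot a a.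
Proof. by move=> /root_neq0; rewrite -dot_self_eq0 lt_def dot_self_ge0 andbT. Qed.

Lemma rootN a : (- a \in S) = (a \in S).
Proof.
have oppS b : b \in S -> - b \in S.
  case: rsS => _ _ reflS _ bS; have := reflS b b bS bS.
  by rewrite reflE cpairxx ?root_neq0 // scaler_nat mulr2n opprD addNKr.
by apply/idP/idP => [/oppS|/oppS //]; rewrite opprK.
Qed.

Lemma SigP g k a : reflect (a \in S /\ cpair g a = k%:~R) (a \in Sig S g k).
Proof. by apply: (iffP andP) => -[aS /eqP]. Qed.

Lemma SigN g k a : (- a \in Sig S g k) = (a \in Sig S g (- k)).
Proof. by rewrite -!topredE /= /Sig rootN cpairNr eqr_oppLR mulrNz. Qed.

Lemma rootB_cpair1 c x : c \in S -> cpair c x = 1 -> (c - x \in S) = (x \in S).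
Proof.
have rootB y : c \in S -> y \in S -> cpair c y = 1 -> c - y \in S.
  case: rsS => _ _ reflS _ cS yS cy1.
  by rewrite -opprB rootN; have := reflS c y cS yS; rewrite reflE cy1 scale1r.
move=> cS cx1; apply/idP/idP => [cxS|xS]; last exact: rootB.
rewrite -[x](subKr c); apply: rootB => //.
by rewrite cpairBr cx1 cpairxx ?root_neq0 //; lra.
Qed.

Lemma Sig_root {g k a} : a \in Sig S g k -> a \in S.
Proof. by case/SigP. Qed.

Lemma Sig_self a : a \in S -> a \in Sig S a 2.
Proof. by move=> aS; apply/SigP; rewrite cpairxx ?root_neq0. Qed.

Lemma SigBr {g c x} {m k : int} : c \in Sig S g m -> x \in Sig S c 1 ->
  (c - x \in Sig S g k) = (x \in Sig S g (m - k)).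
Proof.
move=> /SigP[cS gc] /SigP[xS cx1].
rewrite -!topredE /= /Sig rootB_cpair1 // xS cpairBr gc.
by rewrite rmorphB /= [RHS]eq_sym !subr_eq addrC.
Qed.

(* [cpair c y] is a positive integer, hence at least [1]. *)
Lemma root_dot_self_le c y :
  c \in S -> y \in S -> 0 < dot c y -> dot c c <= 2 * dot c y.
Proof.
move=> cS yS cy_gt0; have c_gt0 := root_dot_gt0 cS.
have [z cyz] : exists z : int, cpair c y = z%:~R by case: rsS => _ _ _; apply.
have z_ge1 : (1 : R) <= z%:~R.
  rewrite ler1z -gtz0_ge1 -(ltr0z R) -cyz /cpair.
  by rewrite divr_gt0 // mulr_gt0.
by rewrite cpair_dot ?root_neq0 // cyz ler_peMl // ltW.
Qed.

Lemma Sig1_Sig2_eq c x y : x \in S -> y \in S -> dot x x = dot y y ->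
  c \in Sig S y 1 -> c \in Sig S x 2 -> c = x.
Proof.
move=> xS yS xy /SigP[cS yc1] /SigP[_ xc2].
have := cpair_dot y c (root_neq0 yS); have := cpair_dot x c (root_neq0 xS).
rewrite yc1 xc2 !(dotC _ c) => dxc dyc.
have cy_gt0 : 0 < dot c y by have := root_dot_gt0 yS; lra.
have cc_le := root_dot_self_le c y cS yS cy_gt0.
by apply: eq_of_dot_self_le; lra.
Qed.

End RootSystem.

Section PositiveSystem.
Context {R : realType} {n : nat} {S Sp : seq 'rV[R]_n}.
Hypothesis posSp : is_positive_system S Sp.

Lemma positive_systemN {g} : g \in Sp -> - g \notin Sp.
Proof.
case: posSp => v [_ SpP] /SpP[_ vg_gt0]; apply/negP => /SpP[_].
by rewrite dotNr oppr_gt0 ltNge ltW.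
Qed.

Lemma positive_system_split {g} :
  is_root_system S -> g \in S -> g \in Sp \/ - g \in Sp.
Proof.
case: posSp => v [v_neq0 SpP] rsS gS.
have := v_neq0 g gS; rewrite neq_lt => /orP[vg_lt0|vg_gt0].
  by right; apply/SpP; rewrite rootN // dotNr oppr_gt0.
by left; apply/SpP.
Qed.

End PositiveSystem.

Section HighestRootStrings.
Variables (R : realType) (n : nat) (S Sp : seq 'rV[R]_n) (beta delta : 'rV[R]_n).
Hypotheses (rsS : is_root_system S) (posSp : is_positive_system S Sp).
Hypotheses (betaS : beta \in S) (delta_Sig : delta \in Sig S beta 1).
Hypothesis delta_norm : dot delta delta = dot beta beta.

Definition Delta_plus a :=
  exists g, [/\ g \in Sp, g \in Sig S beta 0, g \in Sig S delta 1 & a = delta - g].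

Definition Delta_minus a :=
  exists g, [/\ g \in Sp, g \in Sig S beta 0, g \in Sig S delta (-1) & a = delta + g].

Lemma beta_Sig_delta : beta \in Sig S delta 1.
Proof.
apply/SigP; split=> //; rewrite /cpair dotC delta_norm.
by case/SigP: delta_Sig.
Qed.

Lemma Sig_beta1_delta1P a :
  (a \in Sig S beta 1) && (a \in Sig S delta 1) <-> Delta_plus a \/ Delta_minus a.
Proof.
have delta_Sig2 := Sig_self rsS delta (Sig_root delta_Sig).
split=> [/andP[a_b1 a_d1] | [[g [_ g_b0 g_d1 ->]] | [g [_ g_b0 g_dN1 ->]]]].
- have g_b0 : delta - a \in Sig S beta 0 by rewrite (SigBr rsS delta_Sig a_d1).
  have g_d1 : delta - a \in Sig S delta 1 by rewrite (SigBr rsS delta_Sig2 a_d1).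
  have [gSp | NgSp] := positive_system_split posSp rsS (Sig_root g_b0).
    by left; exists (delta - a); rewrite subKr.
  by right; exists (- (delta - a)); rewrite !(SigN rsS) subKr.
- by rewrite (SigBr rsS delta_Sig g_d1) (SigBr rsS delta_Sig2 g_d1); apply/andP.
- rewrite -(SigN rsS) in g_dN1; rewrite -[g]opprK.
  rewrite (SigBr rsS delta_Sig g_dN1) (SigBr rsS delta_Sig2 g_dN1) (SigN rsS).
  by apply/andP.
Qed.

Lemma Delta_plus_minus_disjoint a : ~ (Delta_plus a /\ Delta_minus a).
Proof.
move=> [[g [gSp _ _ ->]] [g' [g'Sp _ _ /addrI g'E]]].
by have := positive_systemN posSp gSp; rewrite g'E g'Sp.
Qed.

Lemma Sig_beta1_delta0P a : (a \in Sig S beta 1) && (a \in Sig S delta 0) <->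
  exists g, [/\ g \in Sig S beta 1, g \in Sig S delta 1 & a = beta - g].
Proof.
have beta_Sig2 := Sig_self rsS beta betaS.
split=> [/andP[a_b1 a_d0] | [g [g_b1 g_d1 ->]]].
  exists (beta - a); rewrite subKr (SigBr rsS beta_Sig2 a_b1).
  by rewrite (SigBr rsS beta_Sig_delta a_b1).
by rewrite (SigBr rsS beta_Sig2 g_b1) (SigBr rsS beta_Sig_delta g_b1); apply/andP.
Qed.

Lemma Sig_beta1_delta2P a : (a \in Sig S beta 1) && (a \in Sig S delta 2) <-> a = delta.
Proof.
have deltaS := Sig_root delta_Sig.
split=> [/andP[a_b1 a_d2] | ->]; last by rewrite delta_Sig (Sig_self rsS).
exact: Sig1_Sig2_eq rsS a delta beta deltaS betaS delta_norm a_b1 a_d2.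
Qed.

Lemma Sig_beta1_deltaN1P a :
  (a \in Sig S beta 1) && (a \in Sig S delta (-1)) <-> a = beta - delta.
Proof.
have deltaS := Sig_root delta_Sig.
split=> [/andP[a_b1 a_dN1] | ->].
  rewrite -(SigN rsS) in a_dN1.
  have b_d1 : delta - - a \in Sig S delta 1.
    by rewrite (SigBr rsS (Sig_self rsS delta deltaS) a_dN1).
  have b_b2 : delta - - a \in Sig S beta 2.
    by rewrite (SigBr rsS delta_Sig a_dN1) (SigN rsS).
  have := Sig1_Sig2_eq rsS _ beta delta betaS deltaS (esym delta_norm) b_d1 b_b2.
  by rewrite opprK => <-; rewrite addrC addKr.
rewrite (SigBr rsS (Sig_self rsS beta betaS) delta_Sig).
rewrite (SigBr rsS beta_Sig_delta delta_Sig); apply/andP; split=> //.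
exact: Sig_self rsS delta deltaS.
Qed.

End HighestRootStrings.

Theorem lemma3p4 (R : realType) (n : nat) (S Sp : seq 'rV[R]_n)
    (beta delta : 'rV[R]_n) :
  is_root_system S -> reduced S -> irreducible S -> ~ type_C S ->
  is_positive_system S Sp -> highest_root S Sp beta ->
  delta \in Sig S beta 1 -> dot delta delta = dot beta beta ->
  let Dp := fun a : 'rV[R]_n => exists g, [/\ g \in Sp, g \in Sig S beta 0,
                                           g \in Sig S delta 1 & a = delta - g] in
  let Dm := fun a : 'rV[R]_n => exists g, [/\ g \in Sp, g \in Sig S beta 0,
                                           g \in Sig S delta (-1) & a = delta + g] in
  [/\ (forall a, (a \in Sig S beta 1) && (a \in Sig S delta 1) <-> Dp a \/ Dm a),
      (forall a, ~ (Dp a /\ Dm a)),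
      (forall a, (a \in Sig S beta 1) && (a \in Sig S delta 0) <->
                 exists g, [/\ g \in Sig S beta 1, g \in Sig S delta 1 & a = beta - g]),
      (forall a, (a \in Sig S beta 1) && (a \in Sig S delta 2) <-> a = delta) &
      (forall a, (a \in Sig S beta 1) && (a \in Sig S delta (-1)) <-> a = beta - delta)].
Proof.
move=> rsS _ _ _ posSp [betaS _] delta_Sig delta_norm Dp Dm.
split=> a.
- by apply: Sig_beta1_delta1P.
- by apply: Delta_plus_minus_disjoint.
- by apply: Sig_beta1_delta0P.
- by apply: Sig_beta1_delta2P.
- by apply: Sig_beta1_deltaN1P.
Qed.
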